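(* Suppose $\mathit{Act}=\{a\}$. Then $\mathcal{E}_{\omega,1}'=\{A1,A2,A3,A4,V1_\omega,O1\}$ is complete for $\simeq_\omega$ over open monitors: for all monitors $m,n$, if $m\simeq_\omega n$ then $\mathcal{E}_{\omega,1}'\vdash m=n$.
   Context: Monitors: terms $m,n ::= v \mid a.m \mid m+n \mid x$ over the action set $\mathit{Act}$ and variables $x$, verdicts $v::=\mathit{end}\mid\mathit{yes}\mid\mathit{no}$. Semantics: $\xrightarrow{\alpha}$ ($\alpha\in\mathit{Act}\cup\{\tau\}$) is the least relation with $a.m\xrightarrow{a}m$; $m\xrightarrow{\alpha}m'$ implies $m+n\xrightarrow{\alpha}m'$ and $n+m\xrightarrow{\alpha}m'$; $v\xrightarrow{\alpha}v$ for verdicts $v$. Weak transitions: $m\xRightarrow{\varepsilon}m'$ iff $m(\xrightarrow{\tau})^*m'$; $m\xRightarrow{a}m'$ iff $m\xRightarrow{\varepsilon}\xrightarrow{a}\xRightarrow{\varepsilon}m'$; $m\xRightarrow{as'}m'$ ($s'\ne\varepsilon$) iff $m\xRightarrow{a}m_1\xRightarrow{s'}m'$. For closed $m$, $L_a(m)=\{s\mid m\xRightarrow{s}\mathit{yes}\}$, $L_r(m)=\{s\mid m\xRightarrow{s}\mathit{no}\}$; closed $m\simeq_\omega n$ iff $L_a(m)\cdot\mathit{Act}^\omega=L_a(n)\cdot\mathit{Act}^\omega$ and $L_r(m)\cdot\mathit{Act}^\omega=L_r(n)\cdot\mathit{Act}^\omega$; for open terms iff $\sigma(m)\simeq_\omega\sigma(n)$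 for all closed substitutions $\sigma$. $\mathcal{E}\vdash m=n$ denotes derivability by reflexivity, symmetry, transitivity, substitution and congruence for $a.\_$ and $+$. Axioms: (A1) $x+y=y+x$; (A2) $x+(y+z)=(x+y)+z$; (A3) $x+x=x$; (A4) $x+\mathit{end}=x$; ($V1_\omega$) $x=a.x$; (O1) $\mathit{yes}+\mathit{no}=\mathit{yes}+\mathit{no}+x$. *)

(* Monitors (regular fragment, no recursion) over an action set Act. *)
From Stdlib Require Import List.
Import ListNotations.
Set Implicit Arguments.

Section Monitors.
Variable Act : Type.

Inductive mon : Type :=
| End : mon
| Yes : mon
| No : mon
| Pre : Act -> mon -> mon
| Sum : mon -> mon -> mon
| Var : nat -> mon.

Definition is_verdict (m : mon) : Prop :=
  match m with End | Yes | No => True | _ => False end.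

(* labels alpha in Act ∪ {tau}: Some b = action b, None = tau *)
Inductive step : mon -> option Act -> mon -> Prop :=
| st_pre : forall b m, step (Pre b m) (Some b) m
| st_suml : forall m n al m', step m al m' -> step (Sum m n) al m'
| st_sumr : forall m n al m', step m al m' -> step (Sum n m) al m'
| st_verd : forall v al, is_verdict v -> step v al v.

Inductive taustar : mon -> mon -> Prop :=
| ts_refl : forall m, taustar m m
| ts_step : forall m m1 m', step m None m1 -> taustar m1 m' -> taustar m m'.

Definition weak1 (m : mon) (b : Act) (m' : mon) : Prop :=
  exists m1 m2, taustar m m1 /\ step m1 (Some b) m2 /\ taustar m2 m'.

Fixpoint weak (m : mon) (s : list Act) (m' : mon) : Prop :=
  match s with
  | [] => taustar m m'
  | [b] => weak1 m b m'
  | b :: s' => exists m1, weak1 m b m1 /\ weak m1 s' m'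
  end.

Definition La (m : mon) (s : list Act) : Prop := weak m s Yes.
Definition Lr (m : mon) (s : list Act) : Prop := weak m s No.

(* infinite traces: streams nat -> Act; s is a prefix of w *)
Definition prefix (s : list Act) (w : nat -> Act) : Prop :=
  forall i d, i < length s -> nth i s d = w i.

Definition omega_ext (L : list Act -> Prop) (w : nat -> Act) : Prop :=
  exists s, L s /\ prefix s w.

Fixpoint closed (m : mon) : Prop :=
  match m with
  | Var _ => False
  | Pre _ m => closed m
  | Sum m n => closed m /\ closed n
  | _ => True
  end.

Fixpoint subst (sg : nat -> mon) (m : mon) : mon :=
  match m with
  | Var x => sg x
  | Pre b m => Pre b (subst sg m)
  | Sum m n => Sum (subst sg m) (subst sg n)
  | v => v
  end.

Definition omega_equiv_closed (m n : mon) : Prop :=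
  (forall w, omega_ext (La m) w <-> omega_ext (La n) w) /\
  (forall w, omega_ext (Lr m) w <-> omega_ext (Lr n) w).

Definition omega_equiv (m n : mon) : Prop :=
  forall sg : nat -> mon, (forall x, closed (sg x)) ->
    omega_equiv_closed (subst sg m) (subst sg n).

(* The axiom set E'_{omega,1} = {A1,A2,A3,A4,V1_omega,O1}, for the action a;
   variables x = Var 0, y = Var 1, z = Var 2. *)
Inductive axiomE (a : Act) : mon -> mon -> Prop :=
| ax_A1 : axiomE a (Sum (Var 0) (Var 1)) (Sum (Var 1) (Var 0))
| ax_A2 : axiomE a (Sum (Var 0) (Sum (Var 1) (Var 2)))
                   (Sum (Sum (Var 0) (Var 1)) (Var 2))
| ax_A3 : axiomE a (Sum (Var 0) (Var 0)) (Var 0)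
| ax_A4 : axiomE a (Sum (Var 0) End) (Var 0)
| ax_V1 : axiomE a (Var 0) (Pre a (Var 0))
| ax_O1 : axiomE a (Sum Yes No) (Sum (Sum Yes No) (Var 0)).

Inductive derive (a : Act) : mon -> mon -> Prop :=
| d_ax : forall m n, axiomE a m n -> derive a m n
| d_refl : forall m, derive a m m
| d_sym : forall m n, derive a m n -> derive a n m
| d_trans : forall m n p, derive a m n -> derive a n p -> derive a m p
| d_subst : forall sg m n, derive a m n -> derive a (subst sg m) (subst sg n)
| d_pre : forall b m n, derive a m n -> derive a (Pre b m) (Pre b n)
| d_sum : forall m m' n n', derive a m m' -> derive a n n' ->
            derive a (Sum m n) (Sum m' n').

End Monitors.

From Stdlib Require Import List Classical Arith.
Import ListNotations.

(* Every monitor m is determined, up to the axioms, by the set of its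
   "atoms": the verdicts yes/no and variables occurring in it.  Indeed V1_omega
   erases prefixes (every prefix is a.-), A4 erases end, and A1-A3 make a sum
   of atoms depend only on the underlying set, so m = sumlist (atoms m).
   Semantically, with a single action every finite trace is a prefix of the
   unique infinite trace, so omega-equivalence of closed monitors only says
   whether yes (resp. no) is reachable, i.e. whether yes (resp. no) is an atom.
   Testing m ~ n under the closed substitutions "all variables := end" and
   "x := v, others := end" shows that m and n have the same verdict atoms, and
   the same variable atoms unless both yes and no are atoms; in that last case
   O1 collapses both normal forms to yes + no. *)

Arguments End {Act}. Arguments Yes {Act}. Arguments No {Act}. Arguments Var {Act}.

Fixpoint atoms {Act : Type} (m : mon Act) : list (mon Act) :=
  match m with
  | End => []
  | Yes => [Yes]
  | No => [No]
  | Var x => [Var x]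
  | Pre _ m => atoms m
  | Sum m n => atoms m ++ atoms n
  end.

Fixpoint sumlist {Act : Type} (l : list (mon Act)) : mon Act :=
  match l with [] => End | t :: l => Sum t (sumlist l) end.

Definition final_verdict {Act : Type} (v : mon Act) : Prop := v = Yes \/ v = No.

Section Normalisation.
Context {Act : Type} (a : Act).

Lemma d_comm (p q : mon Act) : derive a (Sum p q) (Sum q p).
Proof. exact (d_subst (fun i => match i with 0 => p | _ => q end) (d_ax (ax_A1 a))). Qed.

Lemma d_assoc (p q r : mon Act) : derive a (Sum p (Sum q r)) (Sum (Sum p q) r).
Proof. exact (d_subst (fun i => match i with 0 => p | 1 => q | _ => r end) (d_ax (ax_A2 a))). Qed.

Lemma d_idem (p : mon Act) : derive a (Sum p p) p.
Proof. exact (d_subst (fun _ => p) (d_ax (ax_A3 a))). Qed.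

Lemma d_endr (p : mon Act) : derive a (Sum p End) p.
Proof. exact (d_subst (fun _ => p) (d_ax (ax_A4 a))). Qed.

Lemma d_endl (p : mon Act) : derive a (Sum End p) p.
Proof. eapply d_trans; [apply d_comm | apply d_endr]. Qed.

Lemma d_prefix (p : mon Act) : derive a (Pre a p) p.
Proof. apply d_sym; exact (d_subst (fun _ => p) (d_ax (ax_V1 a))). Qed.

Lemma d_yes_no_absorb (p : mon Act) : derive a (Sum (Sum Yes No) p) (Sum Yes No).
Proof. apply d_sym; exact (d_subst (fun _ => p) (d_ax (ax_O1 a))). Qed.

Lemma sumlist_app (l1 l2 : list (mon Act)) :
  derive a (sumlist (l1 ++ l2)) (Sum (sumlist l1) (sumlist l2)).
Proof.
  induction l1 as [|t l1 IH]; simpl.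
  - apply d_sym, d_endl.
  - eapply d_trans; [apply d_sum; [apply d_refl | exact IH] | apply d_assoc].
Qed.

Lemma derive_atoms (Hsingle : forall b : Act, b = a) (m : mon Act) :
  derive a m (sumlist (atoms m)).
Proof.
  induction m as [| | |b m IH|m1 IH1 m2 IH2|x]; simpl.
  - apply d_refl.
  - apply d_sym, d_endr.
  - apply d_sym, d_endr.
  - rewrite (Hsingle b). eapply d_trans; [apply d_prefix | exact IH].
  - eapply d_trans; [apply d_sum; [exact IH1 | exact IH2] |].
    apply d_sym, sumlist_app.
  - apply d_sym, d_endr.
Qed.

Lemma absorb (t : mon Act) (l : list (mon Act)) :
  In t l -> derive a (Sum t (sumlist l)) (sumlist l).
Proof.
  induction l as [|h l IH]; simpl; intros Ht; [destruct Ht |].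
  eapply d_trans; [apply d_assoc |].
  destruct Ht as [<- | Ht].
  - apply d_sum; [apply d_idem | apply d_refl].
  - eapply d_trans; [apply d_sum; [apply d_comm | apply d_refl] |].
    eapply d_trans; [apply d_sym, d_assoc |].
    apply d_sum; [apply d_refl | auto].
Qed.

Lemma absorb_incl (l1 l2 : list (mon Act)) :
  incl l1 l2 -> derive a (Sum (sumlist l1) (sumlist l2)) (sumlist l2).
Proof.
  induction l1 as [|t l1 IH]; simpl; intros Hincl.
  - apply d_endl.
  - eapply d_trans; [apply d_sym, d_assoc |].
    eapply d_trans; [apply d_sum; [apply d_refl | apply IH; eapply incl_cons_inv, Hincl] |].
    apply absorb, Hincl; simpl; auto.
Qed.

Lemma sumlist_same_set (l1 l2 : list (mon Act)) :
  incl l1 l2 -> incl l2 l1 -> derive a (sumlist l1) (sumlist l2).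
Proof.
  intros H12 H21.
  eapply d_trans; [apply d_sym, (absorb_incl _ _ H21) |].
  eapply d_trans; [apply d_comm | apply absorb_incl; exact H12].
Qed.

Lemma sumlist_yes_no (l : list (mon Act)) :
  In Yes l -> In No l -> derive a (sumlist l) (Sum Yes No).
Proof.
  intros HY HN.
  eapply d_trans; [apply d_sym, (absorb_incl [Yes; No] l) |].
  - intros t [<- | [<- | []]]; auto.
  - eapply d_trans; [| apply (d_yes_no_absorb (sumlist l))].
    apply d_sum; [apply d_sum; [apply d_refl | apply d_endr] | apply d_refl].
Qed.

End Normalisation.

Section Reachability.
Context {Act : Type}.

Lemma step_atoms {p p' : mon Act} {al} : step p al p' -> incl (atoms p') (atoms p).
Proof. induction 1; simpl; intros t Ht; try apply in_app_iff; auto. Qed.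

Lemma taustar_atoms {p p' : mon Act} : taustar p p' -> incl (atoms p') (atoms p).
Proof.
  induction 1 as [| p p1 p' Hstep _ IH]; [apply incl_refl |].
  eapply incl_tran; [exact IH | exact (step_atoms Hstep)].
Qed.

Lemma weak1_atoms {p p' : mon Act} {b} : weak1 p b p' -> incl (atoms p') (atoms p).
Proof.
  intros (p1 & p2 & H1 & H2 & H3).
  apply taustar_atoms in H1; apply step_atoms in H2; apply taustar_atoms in H3.
  eauto using incl_tran.
Qed.

Lemma weak_atoms {s : list Act} : forall {p p' : mon Act},
  weak p s p' -> incl (atoms p') (atoms p).
Proof.
  induction s as [|b [|c s] IH]; intros p p' Hw.
  - exact (taustar_atoms Hw).
  - exact (weak1_atoms Hw).
  - destruct Hw as (p1 & H1 & H2).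
    eapply incl_tran; [exact (IH _ _ H2) | exact (weak1_atoms H1)].
Qed.

Lemma weak1_sum {p p' : mon Act} (q : mon Act) {b} :
  weak1 p b p' -> weak1 (Sum p q) b p' /\ weak1 (Sum q p) b p'.
Proof.
  intros (p1 & p2 & H1 & H2 & H3).
  inversion H1; subst.
  - split; [exists (Sum p1 q), p2 | exists (Sum q p1), p2];
      repeat split; auto using ts_refl, st_suml, st_sumr.
  - split; exists p1, p2; repeat split; auto;
      eapply ts_step; eauto using st_suml, st_sumr.
Qed.

Lemma weak_sum {p p' : mon Act} (q : mon Act) {b s} :
  weak p (b :: s) p' -> weak (Sum p q) (b :: s) p' /\ weak (Sum q p) (b :: s) p'.
Proof.
  destruct s as [|c s]; simpl; [apply weak1_sum |].
  intros (p1 & H1 & H2); destruct (weak1_sum q H1).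
  split; exists p1; auto.
Qed.

Lemma weak_pre {p p' : mon Act} (b : Act) {s} : weak p s p' -> weak (Pre b p) (b :: s) p'.
Proof.
  destruct s as [|c s]; simpl; intros Hw.
  - exists (Pre b p), p. repeat split; [apply ts_refl | apply st_pre | exact Hw].
  - exists p. split; [exists (Pre b p), p; auto using ts_refl, st_pre | exact Hw].
Qed.

(* A verdict atom is reached along some nonempty trace; the action b is only
   needed to let a verdict perform its self-loop. *)
Lemma atom_reachable {v : mon Act} (Hv : final_verdict v) (p : mon Act) (b : Act) :
  In v (atoms p) -> exists c s, weak p (c :: s) v.
Proof.
  induction p as [| | |c p IH|p1 IH1 p2 IH2|x]; simpl; intros Hin.
  - destruct Hin.
  - destruct Hin as [<- | []]. exists b, []. exists Yes, Yes.
    repeat split; [apply ts_refl | apply st_verd; exact I | apply ts_refl].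
  - destruct Hin as [<- | []]. exists b, []. exists No, No.
    repeat split; [apply ts_refl | apply st_verd; exact I | apply ts_refl].
  - destruct (IH Hin) as (c' & s & Hw). exists c, (c' :: s). exact (weak_pre c Hw).
  - apply in_app_iff in Hin as [Hin | Hin].
    + destruct (IH1 Hin) as (c & s & Hw). exists c, s. apply (weak_sum p2 Hw).
    + destruct (IH2 Hin) as (c & s & Hw). exists c, s. apply (weak_sum p1 Hw).
  - destruct Hin as [<- | []]. destruct Hv; discriminate.
Qed.

Lemma reachable_iff_atom {v : mon Act} (Hv : final_verdict v) (p : mon Act) (b : Act) :
  (exists s, weak p s v) <-> In v (atoms p).
Proof.
  split.
  - intros (s & Hw). apply (weak_atoms Hw).
    destruct Hv as [-> | ->]; simpl; auto.
  - intros Hin. destruct (atom_reachable Hv p b Hin) as (c & s & Hw). eauto.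
Qed.

(* Over a single action every finite trace is a prefix of every infinite one,
   so L . Act^omega is nonempty exactly when L is. *)
Lemma omega_ext_single {a : Act} (Hsingle : forall b : Act, b = a)
  (L : list Act -> Prop) (w : nat -> Act) :
  omega_ext L w <-> exists s, L s.
Proof.
  split; [intros (s & Hs & _); eauto |].
  intros (s & Hs). exists s. split; [exact Hs |].
  intros i d _. rewrite (Hsingle (nth i s d)), (Hsingle (w i)). reflexivity.
Qed.

End Reachability.

Section Substitution.
Context {Act : Type}.

Lemma atoms_subst (t : mon Act) (Ht : forall x, t <> Var x) (sg : nat -> mon Act) m :
  In t (atoms (subst sg m)) <->
  In t (atoms m) \/ exists x, In (Var x) (atoms m) /\ In t (atoms (sg x)).
Proof.
  induction m as [| | |b m IH|m1 IH1 m2 IH2|y]; simpl.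
  - firstorder.
  - split; [auto | intros [H | (x & [H | []] & _)]; [exact H | discriminate]].
  - split; [auto | intros [H | (x & [H | []] & _)]; [exact H | discriminate]].
  - exact IH.
  - rewrite !in_app_iff, IH1, IH2. split.
    + intros [[H | (x & H1 & H2)] | [H | (x & H1 & H2)]]; eauto 6 using in_or_app.
    + intros [[H | H] | (x & H1 & H2)]; auto.
      apply in_app_iff in H1 as [H1 | H1]; eauto.
  - split.
    + intros H. right. exists y. simpl; auto.
    + intros [[H | []] | (x & [H1 | []] & H2)]; [exfalso; exact (Ht y (eq_sym H)) |].
      injection H1 as ->. exact H2.
Qed.

Definition point_subst (x : nat) (t : mon Act) : nat -> mon Act :=
  fun y => if Nat.eq_dec y x then t else End.

Lemma atoms_subst_end {v : mon Act} (Hv : final_verdict v) m :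
  In v (atoms (subst (fun _ => End) m)) <-> In v (atoms m).
Proof.
  rewrite atoms_subst by (destruct Hv as [-> | ->]; discriminate).
  simpl. firstorder.
Qed.

Lemma atoms_subst_point {v : mon Act} (Hv : final_verdict v) x m :
  In v (atoms (subst (point_subst x v) m)) <-> In v (atoms m) \/ In (Var x) (atoms m).
Proof.
  rewrite atoms_subst by (destruct Hv as [-> | ->]; discriminate).
  unfold point_subst. split.
  - intros [H | (y & H1 & H2)]; [auto |].
    destruct (Nat.eq_dec y x) as [-> | _]; [auto | destruct H2].
  - intros [H | H]; [auto |]. right. exists x. split; [exact H |].
    destruct (Nat.eq_dec x x) as [_ | Hxx]; [| congruence].
    destruct Hv as [-> | ->]; simpl; auto.
Qed.

Lemma point_subst_closed x {v : mon Act} (Hv : final_verdict v) y :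
  closed (point_subst x v y).
Proof. unfold point_subst. destruct (Nat.eq_dec y x); [destruct Hv as [-> | ->] |]; exact I. Qed.

Lemma atoms_shape (t m : mon Act) : In t (atoms m) -> final_verdict t \/ exists x, t = Var x.
Proof.
  unfold final_verdict.
  induction m; simpl; intros H; try (destruct H as [<- | []]; eauto).
  - destruct H.
  - auto.
  - apply in_app_iff in H as [H | H]; auto.
Qed.

End Substitution.

(* What omega-equivalence says about m and n: under every closed substitution
   they have the same verdict atoms. *)
Definition same_verdict_atoms {Act : Type} (m n : mon Act) : Prop :=
  forall sg : nat -> mon Act, (forall x, closed (sg x)) ->
  forall v, final_verdict v -> (In v (atoms (subst sg m)) <-> In v (atoms (subst sg n))).

Section AtomAgreement.
Context {Act : Type} {m n : mon Act}.

Lemma omega_equiv_same_verdict_atoms {a : Act} (Hsingle : forall b : Act, b = a) :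
  omega_equiv m n -> same_verdict_atoms m n.
Proof.
  intros Heq sg Hcl v Hv.
  destruct (Heq sg Hcl) as [HA HR]. specialize (HA (fun _ => a)); specialize (HR (fun _ => a)).
  unfold La, Lr in *. rewrite !(omega_ext_single Hsingle) in HA, HR.
  rewrite <- (reachable_iff_atom Hv _ a), <- (reachable_iff_atom Hv _ a).
  destruct Hv as [-> | ->]; assumption.
Qed.

Hypothesis Hsame : same_verdict_atoms m n.

Lemma verdict_atoms_agree {v : mon Act} (Hv : final_verdict v) :
  In v (atoms m) <-> In v (atoms n).
Proof.
  rewrite <- (atoms_subst_end Hv m), <- (atoms_subst_end Hv n).
  exact (Hsame (fun _ => End) (fun _ => I) v Hv).
Qed.

(* If some verdict v is not an atom, substituting v for x detects x. *)
Lemma var_atoms_agree {v : mon Act} (Hv : final_verdict v) (Hmiss : ~ In v (atoms m)) x :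
  In (Var x) (atoms m) <-> In (Var x) (atoms n).
Proof.
  pose proof (Hsame _ (point_subst_closed x Hv) v Hv) as H.
  rewrite !(atoms_subst_point Hv) in H.
  pose proof (verdict_atoms_agree Hv). tauto.
Qed.

Lemma atoms_same_set {v : mon Act} (Hv : final_verdict v) (Hmiss : ~ In v (atoms m)) :
  incl (atoms m) (atoms n) /\ incl (atoms n) (atoms m).
Proof.
  assert (Hiff : forall t, In t (atoms m) \/ In t (atoms n) -> (In t (atoms m) <-> In t (atoms n))).
  { intros t Ht. assert (Hshape : final_verdict t \/ exists x, t = Var x)
      by (destruct Ht; eapply atoms_shape; eauto).
    destruct Hshape as [Ht' | (x & ->)];
      [apply verdict_atoms_agree | apply (var_atoms_agree Hv Hmiss)]; assumption. }
  split; intros t Ht; apply (Hiff t); auto.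
Qed.

End AtomAgreement.

Theorem mainTheorem17 (Act : Type) (a : Act) (Hsingle : forall b : Act, b = a)
  (m n : mon Act) :
  omega_equiv m n -> derive a m n.
Proof.
  intros Heq.
  pose proof (omega_equiv_same_verdict_atoms Hsingle Heq) as Hsame.
  eapply d_trans; [apply (derive_atoms a Hsingle) |].
  eapply d_trans; [| apply d_sym, (derive_atoms a Hsingle)].
  assert (HYes : final_verdict (@Yes Act)) by (left; reflexivity).
  assert (HNo : final_verdict (@No Act)) by (right; reflexivity).
  destruct (classic (In Yes (atoms m) /\ In No (atoms m))) as [[HY HN] | Hmiss].
  - (* both verdicts occur: both normal forms collapse to yes + no *)
    eapply d_trans; [apply (sumlist_yes_no a _ HY HN) |].
    apply d_sym, sumlist_yes_no; apply (verdict_atoms_agree Hsame); assumption.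
  - (* some verdict is missing: the atom sets coincide *)
    assert (Hv : exists v, final_verdict v /\ ~ In v (atoms m)).
    { destruct (classic (In Yes (atoms m))); [exists No | exists Yes]; tauto. }
    destruct Hv as (v & Hv & Hv_m).
    destruct (atoms_same_set Hsame Hv Hv_m) as [Hmn Hnm].
    exact (sumlist_same_set a _ _ Hmn Hnm).
Qed.
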